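(* Let $\Phi$ be a join doctrine. The following are equivalent: (i) for every complete lattice $X$, $\Phi(X)\subseteq\mathcal{L}(X)$ is closed under arbitrary intersections (meets in $\mathcal{L}(X)$); (ii) for every poset $X$, $\Phi(\mathcal{L}(X))\subseteq\mathcal{L}(\mathcal{L}(X))$ is closed under arbitrary intersections; (iii) for every poset $X$, the complete lattice $\mathcal{L}(X)$ is $\Phi$-continuous.
   Context: A join doctrine is a class $\Phi$ of posets such that: (1) the one-element poset is in $\Phi$; (2) if a poset $P$ is the union of a set $\mathcal{S}$ of subposets each in $\Phi$ and $\mathcal{S}$ (ordered by inclusion) is in $\Phi$, then $P\in\Phi$; (3) if $f:P\to Q$ is monotone with cofinal image and $P\in\Phi$ then $Q\in\Phi$; (4) cofinal subposets of members of $\Phi$ are in $\Phi$. For a poset $X$, $\mathcal{L}(X)$ is the complete lattice of lower subsets of $X$ ordered by inclusion, and $\Phi(X)\subseteq\mathcal{L}(X)$ is the set of lower subsets which, as subposets, belong to $\Phi$. For a poset $X$ with all joins of subsets in $\Phi$, and $x\in X$: $\Downarrow x:=\bigcap\{\phi\in\Phi(X)\mid x\le\bigvee\phi\}$. $X$ is $\Phi$-continuous if for each $x$ there is $\phi\in\Phi(X)$ with $\phi\subseteq\Downarrow x$ and $x\le\bigvee\phi$. *)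

From Stdlib Require Import FunctionalExtensionality PropExtensionality ProofIrrelevance.

Set Implicit Arguments.

Record Poset := {
  carrier :> Type;
  le : carrier -> carrier -> Prop;
  le_refl : forall x, le x x;
  le_antisym : forall x y, le x y -> le y x -> x = y;
  le_trans : forall x y z, le x y -> le y z -> le x z
}.

Arguments le {p} _ _.

Definition one_poset : Poset.
Proof.
  refine {| carrier := unit; le := fun _ _ => True |}.
  - now intros.
  - intros [] [] _ _; reflexivity.
  - now intros.
Defined.

Definition subposet (P : Poset) (A : P -> Prop) : Poset.
Proof.
  refine {| carrier := {x : P | A x}; le := fun x y => le (proj1_sig x) (proj1_sig y) |}.
  - intros x; apply le_refl.
  - intros [x hx] [y hy] h1 h2; simpl in *.
    pose proof (le_antisym P x y h1 h2) as e; subst y.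
    f_equal; apply proof_irrelevance.
  - intros x y z; apply le_trans.
Defined.

Definition incl_poset (T : Type) : Poset.
Proof.
  refine {| carrier := T -> Prop; le := fun A B => forall x, A x -> B x |}.
  - now intros.
  - intros A B h1 h2; apply functional_extensionality; intros x;
      apply propositional_extensionality; split; auto.
  - intros A B C h1 h2 x hx; auto.
Defined.

Definition is_lower {X : Poset} (A : X -> Prop) : Prop :=
  forall x y : X, le x y -> A y -> A x.

Definition LowerSets (X : Poset) : Poset := subposet (incl_poset X) (fun A : X -> Prop => @is_lower X A).

Definition cofinal {P : Poset} (A : P -> Prop) : Prop :=
  forall p : P, exists a : P, A a /\ le p a.

Definition monotone {P Q : Poset} (f : P -> Q) : Prop :=
  forall x y : P, le x y -> le (f x) (f y).

Definition join_doctrine (Phi : Poset -> Prop) : Prop :=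
  Phi one_poset /\
  (forall (P : Poset) (S : (P -> Prop) -> Prop),
      (forall x : P, exists A, S A /\ A x) ->
      (forall A, S A -> Phi (subposet P A)) ->
      Phi (subposet (incl_poset P) S) ->
      Phi P) /\
  (forall (P Q : Poset) (f : P -> Q),
      monotone f -> cofinal (fun q : Q => exists p, q = f p) -> Phi P -> Phi Q) /\
  (forall (P : Poset) (A : P -> Prop), cofinal A -> Phi P -> Phi (subposet P A)).

Definition inPhi (Phi : Poset -> Prop) (X : Poset) (A : X -> Prop) : Prop :=
  is_lower A /\ Phi (subposet X A).

Definition is_ub {X : Poset} (A : X -> Prop) (s : X) : Prop :=
  forall a, A a -> le a s.
Definition is_lub {X : Poset} (A : X -> Prop) (s : X) : Prop :=
  is_ub A s /\ forall t, is_ub A t -> le s t.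

Definition complete_lattice (X : Poset) : Prop :=
  forall A : X -> Prop, exists s, is_lub A s.

Definition Phi_closed_under_intersections (Phi : Poset -> Prop) (X : Poset) : Prop :=
  forall F : (X -> Prop) -> Prop,
    (forall A, F A -> inPhi Phi X A) ->
    inPhi Phi X (fun x => forall A, F A -> A x).

Definition le_join {X : Poset} (x : X) (A : X -> Prop) : Prop :=
  exists s, is_lub A s /\ le x s.

Definition way_below (Phi : Poset -> Prop) (X : Poset) (x : X) : X -> Prop :=
  fun y => forall A, inPhi Phi X A -> le_join x A -> A y.

Definition Phi_continuous (Phi : Poset -> Prop) (X : Poset) : Prop :=
  forall x : X, exists A, inPhi Phi X A /\
    (forall y, A y -> way_below Phi X x y) /\ le_join x A.

(** (iii) => (i): for a complete lattice [X] and [P] the intersection of a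
    family [F] in [Phi(X)], taking sups is a left adjoint [sup : L(P) -> X]
    of [a |-> down a /\ P].  For [A] in [Phi(X)] the right adjoint maps [A]
    cofinally into [sup^-1(A)], so [sup^-1(A)] is in [Phi(L(P))], and its join
    is all of [P].  Continuity of [L(P)] at its top [P] therefore yields [B] in
    [Phi(L(P))] contained in every [sup^-1(A)], [A] in [F]; [sup] maps [B]
    cofinally into [P], so [P] is in [Phi].
    (ii) => (iii): in [L(X)] the principal ideal of each element of [x] lies in
    every [phi] in [Phi(L(X))] with [x <= \/ phi], so the intersection of
    these [phi] witnesses continuity at [x].
    (i) => (ii) because [L(X)] is complete. *)
From Stdlib Require Import ClassicalEpsilon.

Lemma is_lower_intersection (X : Poset) (F : (X -> Prop) -> Prop) :
  (forall A, F A -> is_lower A) -> is_lower (fun x => forall A, F A -> A x).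
Proof. intros HF x y hxy hy A hA; exact (HF A hA x y hxy (hy A hA)). Qed.

Section LowerSets.

Context {X : Poset}.

Definition union_lower (A : LowerSets X -> Prop) : LowerSets X.
Proof.
  refine (exist _ (fun x => exists B : LowerSets X, A B /\ proj1_sig B x) _).
  intros x y hxy [B [hB hy]]; exists B; split; [exact hB | exact (proj2_sig B x y hxy hy)].
Defined.

Lemma is_lub_union_lower (A : LowerSets X -> Prop) : is_lub A (union_lower A).
Proof.
  split.
  - intros B hB x hx; exists B; auto.
  - intros t ht x [B [hB hx]]; exact (ht B hB x hx).
Qed.

Lemma LowerSets_complete : complete_lattice (LowerSets X).
Proof. intros A; exists (union_lower A); apply is_lub_union_lower. Qed.

Lemma le_join_LowerSets (x : LowerSets X) (A : LowerSets X -> Prop) :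
  le_join x A <-> forall a, proj1_sig x a -> exists C, A C /\ proj1_sig C a.
Proof.
  split.
  - intros [s [[_ hs_least] hxs]] a ha.
    exact (hs_least (union_lower A) (proj1 (is_lub_union_lower A)) a (hxs a ha)).
  - intros hx; exists (union_lower A); split; [apply is_lub_union_lower | exact hx].
Qed.

Definition down (a : X) : LowerSets X.
Proof.
  refine (exist _ (fun x => le x a) _).
  intros x y hxy hya; exact (le_trans _ _ _ _ hxy hya).
Defined.

Lemma down_mem_of_le_join {x : LowerSets X} {phi : LowerSets X -> Prop} {a : X} :
  is_lower phi -> le_join x phi -> proj1_sig x a -> phi (down a).
Proof.
  intros hphi hx ha.
  destruct (proj1 (le_join_LowerSets x phi) hx a ha) as [C [hC hCa]].
  apply (hphi (down a) C); [| exact hC].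
  intros b hba; exact (proj2_sig C b a hba hCa).
Qed.

End LowerSets.

Section GaloisConnection.

Context {Q X : Poset} {g : Q -> X} {h : X -> Q}.
Hypothesis g_adj_h : forall q a, le (g q) a <-> le q (h a).

Lemma galois_unit q : le q (h (g q)).
Proof. apply g_adj_h, le_refl. Qed.

Lemma galois_counit a : le (g (h a)) a.
Proof. apply g_adj_h, le_refl. Qed.

Lemma galois_left_monotone : monotone g.
Proof. intros q q' hq; apply g_adj_h, (le_trans _ _ _ _ hq), galois_unit. Qed.

Lemma galois_right_monotone : monotone h.
Proof. intros a a' ha; apply g_adj_h, (le_trans _ _ _ _ (galois_counit a)), ha. Qed.

End GaloisConnection.

Section CompleteLattice.

Context {X : Poset} (X_complete : complete_lattice X) (psi : X -> Prop).

Let P : Poset := subposet X psi.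

Definition sup_lower (z : LowerSets P) : X :=
  proj1_sig (constructive_indefinite_description _
    (X_complete (fun x => exists p : P, proj1_sig z p /\ proj1_sig p = x))).

Lemma is_lub_sup_lower (z : LowerSets P) :
  is_lub (fun x => exists p : P, proj1_sig z p /\ proj1_sig p = x) (sup_lower z).
Proof. exact (proj2_sig (constructive_indefinite_description _ _)). Qed.

Definition down_restrict (a : X) : LowerSets P.
Proof.
  refine (exist _ (fun p : P => le (proj1_sig p) a) _).
  intros x y hxy hya; exact (le_trans X _ _ _ hxy hya).
Defined.

Lemma sup_lower_adj_down_restrict (z : LowerSets P) (a : X) :
  le (sup_lower z) a <-> le z (down_restrict a).
Proof.
  split.
  - intros hza p hp.
    assert (hp_le : le (proj1_sig p) (sup_lower z))
      by (apply (proj1 (is_lub_sup_lower z)); exists p; split; [exact hp | reflexivity]).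
    exact (le_trans X _ _ _ hp_le hza).
  - intros hza; apply (proj2 (is_lub_sup_lower z)); intros x [p [hp <-]]; exact (hza p hp).
Qed.

End CompleteLattice.

Section CofinalImage.

Variable Phi : Poset -> Prop.
Hypothesis Phi_cofinal_image : forall (P Q : Poset) (f : P -> Q),
  monotone f -> cofinal (fun q : Q => exists p, q = f p) -> Phi P -> Phi Q.

Lemma Phi_subposet_cofinal_image (X Y : Poset) (f : X -> Y) (A : X -> Prop) (B : Y -> Prop) :
  monotone f -> (forall a, A a -> B (f a)) ->
  (forall b, B b -> exists a, A a /\ le b (f a)) ->
  Phi (subposet X A) -> Phi (subposet Y B).
Proof.
  intros hf hAB hcof.
  apply (Phi_cofinal_image (subposet X A) (subposet Y B)
           (fun a => exist B (f (proj1_sig a)) (hAB _ (proj2_sig a)))).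
  - intros a a' ha; exact (hf _ _ ha).
  - intros [b hb]; destruct (hcof b hb) as [a [ha hba]].
    exists (exist B (f a) (hAB a ha)); split; [exists (exist A a ha); reflexivity | exact hba].
Qed.

Lemma inPhi_galois_preimage {Q X : Poset} {g : Q -> X} {h : X -> Q} {A : X -> Prop} :
  (forall q a, le (g q) a <-> le q (h a)) ->
  inPhi Phi X A -> inPhi Phi Q (fun q => A (g q)).
Proof.
  intros g_adj_h [hA hPhiA]; split.
  - intros q q' hq; apply hA, (galois_left_monotone g_adj_h _ _ hq).
  - apply (Phi_subposet_cofinal_image _ _ h A); [| | | exact hPhiA].
    + exact (galois_right_monotone g_adj_h).
    + intros a ha; exact (hA _ _ (galois_counit g_adj_h a) ha).
    + intros q hq; exists (g q); split; [exact hq | exact (galois_unit g_adj_h q)].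
Qed.

Lemma closed_complete_of_Phi_continuous_LowerSets :
  (forall X, Phi_continuous Phi (LowerSets X)) ->
  forall X, complete_lattice X -> Phi_closed_under_intersections Phi X.
Proof.
  intros Hcont X X_complete F HF.
  set (psi := fun x : X => forall A, F A -> A x).
  split; [apply is_lower_intersection; intros A hA; exact (proj1 (HF A hA)) |].
  set (P := subposet X psi).
  set (sup := sup_lower X_complete psi).
  pose proof (sup_lower_adj_down_restrict X_complete psi) as adj.
  set (top := exist (fun A : P -> Prop => is_lower A) (fun _ => True) (fun _ _ _ _ => I)
              : LowerSets P).
  destruct (Hcont P top) as [B [[_ hPhiB] [hB_way hB_join]]].
  assert (sup_B_psi : forall z, B z -> psi (sup z)).
  { intros z hz A hA.
    apply (hB_way z hz (fun z => A (sup z))); [exact (inPhi_galois_preimage adj (HF A hA)) |].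
    apply le_join_LowerSets; intros p _; exists (down_restrict psi (proj1_sig p)); split.
    - exact (proj1 (HF A hA) _ _ (galois_counit adj _) (proj2_sig p A hA)).
    - exact (le_refl X _). }
  apply (Phi_subposet_cofinal_image _ _ sup B); [| | | exact hPhiB].
  - exact (galois_left_monotone adj).
  - exact sup_B_psi.
  - intros y hy.
    destruct (proj1 (le_join_LowerSets top B) hB_join (exist psi y hy) I) as [C [hC hyC]].
    exists C; split; [exact hC | exact (galois_unit adj C (exist psi y hy) hyC)].
Qed.

End CofinalImage.

Lemma Phi_continuous_LowerSets_of_closed (Phi : Poset -> Prop) (X : Poset) :
  Phi_closed_under_intersections Phi (LowerSets X) -> Phi_continuous Phi (LowerSets X).
Proof.
  intros Hclosed x.
  set (F := fun phi => inPhi Phi (LowerSets X) phi /\ le_join x phi).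
  exists (fun y => forall phi, F phi -> phi y); split; [| split].
  - apply Hclosed; intros phi [hphi _]; exact hphi.
  - intros y hy phi hphi hx; exact (hy phi (conj hphi hx)).
  - apply le_join_LowerSets; intros a ha; exists (down a); split; [| exact (le_refl X a)].
    intros phi [[hphi _] hx]; exact (down_mem_of_le_join hphi hx ha).
Qed.

Theorem proposition2p8 (Phi : Poset -> Prop) (HPhi : join_doctrine Phi) :
  ((forall X : Poset, complete_lattice X -> Phi_closed_under_intersections Phi X) <->
   (forall X : Poset, Phi_closed_under_intersections Phi (LowerSets X))) /\
  ((forall X : Poset, Phi_closed_under_intersections Phi (LowerSets X)) <->
   (forall X : Poset, Phi_continuous Phi (LowerSets X))).
Proof.
  destruct HPhi as [_ [_ [Phi_cofinal_image _]]].
  pose proof (closed_complete_of_Phi_continuous_LowerSets Phi Phi_cofinal_image) as iii_i.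
  pose proof (Phi_continuous_LowerSets_of_closed Phi) as ii_iii.
  assert (i_ii : (forall X, complete_lattice X -> Phi_closed_under_intersections Phi X) ->
                 forall X, Phi_closed_under_intersections Phi (LowerSets X)).
  { intros Hi X; exact (Hi _ LowerSets_complete). }
  split; split; intros H.
  - exact (i_ii H).
  - exact (iii_i (fun X => ii_iii X (H X))).
  - exact (fun X => ii_iii X (H X)).
  - exact (i_ii (iii_i H)).
Qed.
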